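(* Let $f:\{0,1\}^n\to\{0,1\}$ and consider a memoryless quantum query algorithm that computes $f$ in $T$ queries, with intermediate states $|\psi_x^t\rangle$. If $x,y\in\{0,1\}^n$ satisfy $f(x)\neq f(y)$, then $$\sum_{t=0}^{T-1}\sqrt{\sum_{i:\,x_i\neq y_i}\big\|(|i\rangle\langle i|\otimes I)|\psi_x^t\rangle\big\|^2}\ \ge\ \frac16 .$$
   Context: Let $\mathcal H$ be the $2n$-dimensional Hilbert space with orthonormal basis $\{|i,b\rangle: i\in\{1,\dots,n\}, b\in\{0,1\}\}$ (index register $i$, value register $b$). For $x\in\{0,1\}^n$ the binary oracle is $O_x|i,b\rangle=|i,b\oplus x_i\rangle$. A memoryless quantum query algorithm with query complexity $T$ is a sequence $U_0,\dots,U_T$ of unitaries on $\mathcal H$; its intermediate state after $t$ queries on input $x$ is $|\psi_x^t\rangle=U_tO_x\cdots U_1O_xU_0|\mathrm{init}\rangle$ for a fixed basis state $|\mathrm{init}\rangle$. It outputs $b$ with probability $\|(I\otimes|b\rangle\langle b|)|\psi_x^T\rangle\|^2$, and computes $f$ if for every $x$ it outputs $f(x)$ with probability at least $2/3$. *)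

From mathcomp Require Import all_boot all_order all_algebra.
Set Implicit Arguments. Unset Strict Implicit. Unset Printing Implicit Defensive.
Import Order.TTheory GRing.Theory Num.Theory.
Local Open Scope ring_scope.

(* Basis index of H = C^n (x) C^2 : pairs (i, b), i : 'I_n, b : bool. *)
Definition idx (n : nat) : finType := ('I_n * bool)%type.

Definition vec (C : numClosedFieldType) (n : nat) := idx n -> C.
Definition op (C : numClosedFieldType) (n : nat) := idx n -> idx n -> C.

Definition apply (C : numClosedFieldType) (n : nat) (U : op C n) (v : vec C n)
  : vec C n := fun j => \sum_(k : idx n) U j k * v k.

(* U is unitary: U^dagger U = I (equivalent to unitarity in finite dimension). *)
Definition unitary (C : numClosedFieldType) (n : nat) (U : op C n) : Prop :=
  forall j k : idx n, \sum_(l : idx n) (U l j)^* * U l k = (j == k)%:R.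

Definition basis_vec (C : numClosedFieldType) (n : nat) (a : idx n) : vec C n :=
  fun j => (j == a)%:R.

(* Binary oracle O_x |i,b> = |i, b xor x_i>, so (O_x v)(i,b) = v(i, b xor x_i). *)
Definition oracle (C : numClosedFieldType) (n : nat) (x : {ffun 'I_n -> bool})
  (v : vec C n) : vec C n := fun j => v (j.1, xorb j.2 (x j.1)).

Fixpoint state (C : numClosedFieldType) (n : nat) (U : nat -> op C n)
  (init : idx n) (x : {ffun 'I_n -> bool}) (t : nat) : vec C n :=
  match t with
  | 0 => apply (U 0%N) (basis_vec C init)
  | t'.+1 => apply (U t) (oracle x (state U init x t'))
  end.

(* Probability of outputting b: || (I (x) |b><b|) psi ||^2. *)
Definition out_prob (C : numClosedFieldType) (n : nat) (v : vec C n) (b : bool) : C :=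
  \sum_(i : 'I_n) `|v (i, b)| ^+ 2.

Definition computes (C : numClosedFieldType) (n T : nat) (U : nat -> op C n)
  (init : idx n) (f : {ffun 'I_n -> bool} -> bool) : Prop :=
  (forall t, (t <= T)%N -> unitary (U t)) /\
  forall x : {ffun 'I_n -> bool}, 2%:R / 3%:R <= out_prob (state U init x T) (f x).

Definition index_weight (C : numClosedFieldType) (n : nat) (v : vec C n) (i : 'I_n) : C :=
  \sum_(b : bool) `|v (i, b)| ^+ 2.

From mathcomp Require Import all_boot all_order all_algebra ring.
Import Order.TTheory GRing.Theory Num.Theory.
Set Implicit Arguments. Unset Strict Implicit. Unset Printing Implicit Defensive.
Local Open Scope ring_scope.

(* Hybrid argument.  Unitaries preserve the distance between the runs on [x] and
   [y], and the [t]-th query increases it by at most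
   [||(O_x - O_y) psi_x^t|| <= 2 sqrt W_t], where [W_t] is the weight of
   [psi_x^t] on the indices where [x] and [y] differ.  Hence
   [||psi_x^T - psi_y^T|| <= 2 sum_t sqrt W_t].  On the other hand the two final
   unit vectors put weight [>= 2/3] on opposite output bits, which forces them
   to be at distance [>= 1/3]. *)

Section L2Norm.
Variables (C : numClosedFieldType) (I : finType).
Implicit Types (u v : I -> C).

Definition sqnorm v : C := \sum_i `|v i| ^+ 2.
Definition l2norm v : C := sqrtC (sqnorm v).

Lemma sqnorm_ge0 v : 0 <= sqnorm v.
Proof. by apply: sumr_ge0 => i _; rewrite exprn_ge0. Qed.

Lemma eq_sqnorm u v : u =1 v -> sqnorm u = sqnorm v.
Proof. by move=> eq_uv; apply: eq_bigr => i _; rewrite eq_uv. Qed.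

Lemma l2norm_ge0 v : 0 <= l2norm v.
Proof. by rewrite sqrtC_ge0 sqnorm_ge0. Qed.

Lemma sqnorm_perm (h : I -> I) v : injective h -> sqnorm (v \o h) = sqnorm v.
Proof. by move=> h_inj; rewrite /sqnorm [RHS](reindex_inj h_inj). Qed.

Lemma sum_mul_sqr_le (a b : I -> C) : (forall i, 0 <= a i) -> (forall i, 0 <= b i) ->
  (\sum_i a i * b i) ^+ 2 <= (\sum_i a i ^+ 2) * (\sum_i b i ^+ 2).
Proof.
move=> a_ge0 b_ge0; rewrite -(ler_pMn2r (n := 2)) //.
have -> : (\sum_i a i * b i) ^+ 2 *+ 2 =
          \sum_i \sum_j (a i * b i) * (a j * b j) *+ 2.
  by rewrite expr2 mulr_suml -sumrMnl; apply: eq_bigr => i _; rewrite mulr_sumr -sumrMnl.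
have -> : (\sum_i a i ^+ 2) * (\sum_i b i ^+ 2) *+ 2 =
          \sum_i \sum_j (a i ^+ 2 * b j ^+ 2 + a j ^+ 2 * b i ^+ 2).
  rewrite mulr2n {1}big_distrlr exchange_big /= big_distrlr -big_split /=.
  by apply: eq_bigr => i _; rewrite addrC -big_split.
apply: ler_sum => i _; apply: ler_sum => j _.
(* Lagrange's identity, one pair at a time *)
rewrite -subr_ge0 (_ : _ - _ = (a i * b j - a j * b i) ^+ 2); last by ring.
by apply: real_exprn_even_ge0 => //; rewrite rpredB // rpredM // ger0_real.
Qed.

Lemma l2normD_le u v :
  l2norm (fun i => u i + v i) <= l2norm u + l2norm v.
Proof.
have sum_ge0 : 0 <= l2norm u + l2norm v by rewrite addr_ge0 ?l2norm_ge0.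
rewrite -(sqrCK sum_ge0) ler_sqrtC ?nnegrE ?sqnorm_ge0 ?exprn_ge0 //.
have cs : \sum_i `|u i| * `|v i| <= l2norm u * l2norm v.
  have uv_ge0 : 0 <= \sum_i `|u i| * `|v i| by apply: sumr_ge0 => i _; rewrite mulr_ge0.
  rewrite -sqrtCM ?nnegrE ?sqnorm_ge0 // -(sqrCK uv_ge0).
  rewrite ler_sqrtC ?nnegrE ?mulr_ge0 ?sqnorm_ge0 ?exprn_ge0 //.
  exact: (@sum_mul_sqr_le (fun i => `|u i|) (fun i => `|v i|)).
apply: (@le_trans _ _ (\sum_i (`|u i| + `|v i|) ^+ 2)).
  by apply: ler_sum => i _; rewrite lerXn2r ?nnegrE ?addr_ge0 ?ler_normD.
rewrite sqrrD !sqrtCK [X in _ <= X]addrAC.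
have -> : \sum_i (`|u i| + `|v i|) ^+ 2 =
          sqnorm u + sqnorm v + (\sum_i `|u i| * `|v i|) *+ 2.
  by rewrite /sqnorm -sumrMnl -!big_split; apply: eq_bigr => i _; rewrite sqrrD addrAC.
by rewrite lerD2l lerMn2r.
Qed.

Lemma normB_sqr_le (p q : C) :
  `|p - q| ^+ 2 + `|q - p| ^+ 2 <= 4 * (`|p| ^+ 2 + `|q| ^+ 2).
Proof.
rewrite -subr_ge0 (_ : _ - _ = `|p + q| ^+ 2 *+ 2) ?mulrn_wge0 ?exprn_ge0 //.
by rewrite !normCK !rmorphB rmorphD /=; ring.
Qed.

(* [70 (a - b)^2 - (21 a^2 - 30 b^2) = (7 a - 10 b)^2]; the constants are tuned
   so that success probabilities [2/3] force [70 |v - w|^2 >= 51 * 4/3 - 60 = 8]. *)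
Lemma norm_sub_sqr_ge (p q : C) :
  21 * `|p| ^+ 2 - 30 * `|q| ^+ 2 <= 70 * `|p - q| ^+ 2.
Proof.
apply: (@le_trans _ _ (70 * (`|p| - `|q|) ^+ 2)).
  rewrite -subr_ge0 (_ : _ - _ = (7 * `|p| - 10 * `|q|) ^+ 2); last by ring.
  by apply: real_exprn_even_ge0 => //; rewrite rpredB // rpredM // ger0_real.
rewrite ler_pM2l ?ltr0n // -real_normK ?rpredB ?ger0_real //.
by rewrite lerXn2r ?nnegrE ?ler_dist_dist.
Qed.

End L2Norm.

Section QueryAlgorithm.
Variables (C : numClosedFieldType) (n : nat).
Implicit Types (u v w : vec C n) (x y : {ffun 'I_n -> bool}).

Lemma sqnorm_apply_unitary (U : op C n) v : unitary U -> sqnorm (apply U v) = sqnorm v.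
Proof.
move=> U_unitary; rewrite /sqnorm /apply.
transitivity (\sum_j \sum_k \sum_k' U j k * v k * (U j k' * v k')^* ).
  apply: eq_bigr => j _; rewrite normCK rmorph_sum big_distrl /=.
  by apply: eq_bigr => k _; rewrite big_distrr.
transitivity (\sum_k \sum_k' v k * (v k')^* * \sum_j (U j k')^* * U j k).
  rewrite exchange_big; apply: eq_bigr => k _ /=.
  rewrite exchange_big; apply: eq_bigr => k' _ /=.
  by rewrite mulr_sumr; apply: eq_bigr => j _; rewrite rmorphM /=; ring.
apply: eq_bigr => k _; rewrite normCK.
under eq_bigr => k' _ do rewrite U_unitary mulr_natr mulrb.
by rewrite -big_mkcond big_pred1_eq.
Qed.

Lemma applyB (U : op C n) u v j :
  apply U u j - apply U v j = apply U (fun k => u k - v k) j.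
Proof. by rewrite /apply -sumrB; apply: eq_bigr => k _; rewrite mulrBr. Qed.

Lemma sqnorm_oracle x v : sqnorm (oracle x v) = sqnorm v.
Proof.
pose flip (j : idx n) : idx n := (j.1, xorb j.2 (x j.1)).
apply: (@sqnorm_perm _ _ flip); apply: (can_inj (g := flip)).
by move=> -[i b]; rewrite /flip /=; case: b; case: (x i).
Qed.

Lemma sqnorm_basis_vec (a : idx n) : sqnorm (basis_vec C a) = 1.
Proof.
rewrite /sqnorm (bigD1 a) //= big1 => [|j /negbTE j_neq_a].
  by rewrite /basis_vec eqxx normr1 expr1n addr0.
by rewrite /basis_vec j_neq_a normr0 expr0n.
Qed.

Lemma sqnorm_state (U : nat -> op C n) init x T :
  (forall t, (t <= T)%N -> unitary (U t)) ->
  forall t, (t <= T)%N -> sqnorm (state U init x t) = 1.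
Proof.
move=> U_unitary; elim=> [|t IHt] le_tT /=.
  by rewrite sqnorm_apply_unitary ?sqnorm_basis_vec //; apply: U_unitary.
rewrite sqnorm_apply_unitary; last exact: U_unitary.
by rewrite sqnorm_oracle IHt // ltnW.
Qed.

Lemma sqnorm_index_weight v : sqnorm v = \sum_i index_weight v i.
Proof. by rewrite /index_weight pair_bigA; apply: eq_bigr => -[i c]. Qed.

Lemma sqnorm_out_prob v b : sqnorm v = out_prob v b + out_prob v (~~ b).
Proof.
rewrite sqnorm_index_weight /out_prob -big_split; apply: eq_bigr => i _.
by rewrite /index_weight big_bool; case: b => //=; rewrite addrC.
Qed.

Lemma sqnorm_oracleB x y v :
  sqnorm (fun j => oracle x v j - oracle y v j)
    <= 4 * \sum_(i | x i != y i) index_weight v i.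
Proof.
rewrite sqnorm_index_weight mulr_sumr [leRHS]big_mkcond; apply: ler_sum => i _.
rewrite /index_weight !big_bool /oracle /=.
case: (x i); case: (y i); rewrite /= ?subrr ?normr0 ?expr0n ?addr0 //.
  by rewrite [leLHS]addrC normB_sqr_le.
exact: normB_sqr_le.
Qed.

Lemma l2norm_oracleB x y v :
  l2norm (fun j => oracle x v j - oracle y v j)
    <= 2 * sqrtC (\sum_(i | x i != y i) index_weight v i).
Proof.
have W_ge0 : 0 <= \sum_(i | x i != y i) index_weight v i.
  by apply: sumr_ge0 => i _; apply: sumr_ge0 => c _; rewrite exprn_ge0.
have sqrt4 : sqrtC 4 = 2 :> C by rewrite (_ : 4 = 2 ^+ 2) ?sqrCK ?ler0n // -natrX.
rewrite -sqrt4 -sqrtCM ?nnegrE ?ler0n // ler_sqrtC ?nnegrE ?sqnorm_ge0 ?mulr_ge0 ?ler0n //.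
exact: sqnorm_oracleB.
Qed.

Lemma l2norm_distinguish v w b : sqnorm v = 1 -> sqnorm w = 1 ->
  2 / 3 <= out_prob v b -> 2 / 3 <= out_prob w (~~ b) ->
  1 / 3 <= l2norm (fun j => v j - w j).
Proof.
move=> v_unit w_unit v_accept w_accept.
have v_reject : out_prob v (~~ b) = 1 - out_prob v b.
  by rewrite -v_unit (sqnorm_out_prob v b) addrC addKr.
have w_reject : out_prob w b = 1 - out_prob w (~~ b).
  by rewrite -w_unit (sqnorm_out_prob w (~~ b)) negbK addrC addKr.
set D := sqnorm (fun j => v j - w j); set P := out_prob v b; set Q := out_prob w (~~ b).
have D_ge : 21 * (P + Q) - 30 * ((1 - Q) + (1 - P)) <= 70 * D.
  rewrite -v_reject -w_reject /D (sqnorm_out_prob _ b) [leRHS]mulrDr.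
  rewrite (_ : 21 * (P + Q) - _ =
    (21 * P - 30 * out_prob w b) + (21 * Q - 30 * out_prob v (~~ b))); last by ring.
  rewrite /P /Q /out_prob !mulr_sumr -!sumrB; apply: lerD; apply: ler_sum => i _.
    exact: norm_sub_sqr_ge.
  by rewrite distrC; exact: norm_sub_sqr_ge.
have D_ge9 : 1 <= D * 9.
  move: v_accept w_accept; rewrite !ler_pdivrMr ?ltr0n // => v_accept w_accept.
  rewrite -(ler_pM2l (_ : 0 < 70)) ?ltr0n // mulr1 -subr_ge0.
  have -> : 70 * (D * 9) - 70 = (70 * D - (21 * (P + Q) - 30 * ((1 - Q) + (1 - P)))) * 9
      + (P * 3 - 2) * 153 + (Q * 3 - 2) * 153 + 2 by ring.
  by rewrite !addr_ge0 ?mulr_ge0 ?subr_ge0 ?ler0n.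
rewrite -(sqrCK (_ : 0 <= 1 / 3)) ?divr_ge0 ?ler0n //.
rewrite ler_sqrtC ?nnegrE ?exprn_ge0 ?sqnorm_ge0 ?divr_ge0 ?ler0n //.
by rewrite expr_div_n expr1n -natrX ler_pdivrMr ?ltr0n.
Qed.

Section Hybrid.
Variables (U : nat -> op C n) (init : idx n).
Local Notation psi := (state U init).

Lemma l2norm_stateB_succ x y t : unitary (U t.+1) ->
  l2norm (fun j => psi x t.+1 j - psi y t.+1 j)
    <= l2norm (fun j => oracle x (psi x t) j - oracle y (psi x t) j)
       + l2norm (fun j => psi x t j - psi y t j).
Proof.
move=> U_unitary.
have -> : l2norm (fun j => psi x t.+1 j - psi y t.+1 j) =
          l2norm (fun j => (oracle x (psi x t) j - oracle y (psi x t) j)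
                           + oracle y (fun k => psi x t k - psi y t k) j).
  rewrite /l2norm (eq_sqnorm (fun j => applyB _ _ _ j)) sqnorm_apply_unitary //.
  by congr sqrtC; apply: eq_sqnorm => j; rewrite /oracle addrA subrK.
apply: le_trans (l2normD_le (fun j => oracle x (psi x t) j - oracle y (psi x t) j)
                            (oracle y (fun k => psi x t k - psi y t k))) _.
by rewrite [X in _ + X]/l2norm sqnorm_oracle.
Qed.

Lemma l2norm_stateB_le x y T : (forall t, (t <= T)%N -> unitary (U t)) ->
  forall t, (t <= T)%N -> l2norm (fun j => psi x t j - psi y t j)
    <= \sum_(s < t) l2norm (fun j => oracle x (psi x s) j - oracle y (psi x s) j).
Proof.
move=> U_unitary; elim=> [|t IHt] lt_tT.
  rewrite big_ord0 /l2norm (_ : sqnorm _ = 0) ?sqrtC0 //.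
  by apply: big1 => j _; rewrite subrr normr0 expr0n.
apply: le_trans (l2norm_stateB_succ x y (U_unitary _ lt_tT)) _.
by rewrite big_ord_recr /= addrC lerD2l IHt // ltnW.
Qed.

End Hybrid.

End QueryAlgorithm.

Theorem corollary2p2 (C : numClosedFieldType) (n T : nat)
  (f : {ffun 'I_n -> bool} -> bool) (U : nat -> op C n) (init : idx n) :
  computes T U init f ->
  forall x y : {ffun 'I_n -> bool}, f x != f y ->
  1 / 6%:R <= \sum_(t < T)
     sqrtC (\sum_(i : 'I_n | x i != y i) index_weight (state U init x t) i).
Proof.
move=> [U_unitary correct] x y fx_neq_fy.
have correct_y : 2 / 3 <= out_prob (state U init y T) (~~ f x).
  by move: fx_neq_fy (correct y); case: (f x); case: (f y).
have unit z : sqnorm (state U init z T) = 1 := sqnorm_state init z U_unitary (leqnn T).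
have sep := l2norm_distinguish (unit x) (unit y) (correct x) correct_y.
have hybrid := l2norm_stateB_le init x y U_unitary (leqnn T).
set S := (X in _ <= X).
have : 1 / 3 <= 2 * S.
  apply: le_trans sep (le_trans hybrid _).
  by rewrite /S mulr_sumr; apply: ler_sum => t _; apply: l2norm_oracleB.
by rewrite !ler_pdivrMr ?ltr0n // (_ : 2 * S * 3 = S * 6) //; ring.
Qed.
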